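(* Let $\omega\ge 3$, $m\ge 0$, $1\le k\le\lfloor(\omega-2)/2\rfloor$, and let $G$ be the group with presentation $$\langle \alpha,\beta\mid (\beta\alpha)^{k}\beta = \{(\beta\alpha)^k\beta^{\omega-2k}[(\beta\alpha)^k\beta\alpha^{-1}(\alpha\beta)^{-k}]^{-\omega+k}\}^m(\alpha\beta)^{k}\alpha\rangle.$$ For any homomorphism $\Phi:G\to\mathrm{Homeo}^+(\mathbb{R})$, if $\Phi(\alpha)(t)>t$ for all $t\in\mathbb{R}$, then $\Phi(\beta)(t)\ge t$ for all $t\in\mathbb{R}$.
   Context: $\mathrm{Homeo}^+(\mathbb{R})$ is the group of order-preserving homeomorphisms of $\mathbb{R}$. (This $G$ is the knot group of the closure of the braid $(\sigma_1\cdots\sigma_{2k})(\sigma_1\cdots\sigma_{\omega-1})^{1+m\omega}$.) *)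

From Stdlib Require Import Reals List ZArith Arith.
Open Scope R_scope.

Definition homeo_plus (f g : R -> R) : Prop :=
  (forall t, f (g t) = t) /\ (forall t, g (f t) = t) /\
  (forall s t, s < t -> f s < f t) /\
  continuity f /\ continuity g.

(** Words in the generators alpha, beta and their inverses. *)
Inductive letter := LA | LAi | LB | LBi.
Definition word := list letter.

Definition inv_letter (l : letter) : letter :=
  match l with LA => LAi | LAi => LA | LB => LBi | LBi => LB end.

Definition winv (w : word) : word := rev (map inv_letter w).

Fixpoint wpow (w : word) (n : nat) : word :=
  match n with O => nil | S n' => w ++ wpow w n' end.

Definition wzpow (w : word) (z : Z) : word :=
  if (0 <=? z)%Z then wpow w (Z.to_nat z) else wpow (winv w) (Z.to_nat (- z)).

(** Evaluation of a word under the homomorphism sending alpha |-> a, beta |-> b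
    (with inverses ai, bi); products are compositions: (x y)(t) = x (y t). *)
Fixpoint weval (a ai b bi : R -> R) (w : word) (t : R) : R :=
  match w with
  | nil => t
  | l :: w' =>
      let u := weval a ai b bi w' t in
      match l with LA => a u | LAi => ai u | LB => b u | LBi => bi u end
  end.

Definition ba : word := LB :: LA :: nil.
Definition ab : word := LA :: LB :: nil.

Definition rel_lhs (k : nat) : word := wpow ba k ++ LB :: nil.

Definition relC (k : nat) : word :=
  wpow ba k ++ (LB :: LAi :: nil) ++ wzpow ab (- Z.of_nat k).

Definition relW (omega k : nat) : word :=
  wpow ba k ++ wpow (LB :: nil) (omega - 2 * k) ++
  wzpow (relC k) (Z.of_nat k - Z.of_nat omega)%Z.

Definition rel_rhs (omega m k : nat) : word :=
  wpow (relW omega k) m ++ wpow ab k ++ LA :: nil.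

From Stdlib Require Import Reals List ZArith Arith Lra Lia.
Open Scope R_scope.

(* Write A, B for the images of alpha, beta, X := (AB)^k, and D for the image
   of C^-1.  Conjugating A > id by X gives g := X A X^-1 >= id, and D = g B^-1;
   hence D B = g, B D = B g B^-1 and (BA) B^-1 lie above the identity, and so
   do the products D^j B^j, B^j D^j and (BA)^j B^-j.  Together they give
   W >= id.  Finally (BA)^k B = B X turns the relation into
   B X = W^m X A >= X A >= X, that is B >= id. *)

Lemma strict_increasing_increasing (f : R -> R) :
  strict_increasing f -> increasing f.
Proof.
  intros f_incr s t [st | <-].
  - now apply Rlt_le, f_incr.
  - apply Rle_refl.
Qed.

Lemma increasing_inverse (f g : R -> R) :
  (forall t, f (g t) = t) -> strict_increasing f -> increasing g.
Proof.
  intros fg f_incr s t st.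
  destruct (Rle_or_lt (g s) (g t)) as [le | lt]; [exact le |].
  apply f_incr in lt. rewrite !fg in lt. lra.
Qed.

Lemma increasing_comp (f g : R -> R) :
  increasing f -> increasing g -> increasing (fun t => f (g t)).
Proof. intros f_incr g_incr s t st. now apply f_incr, g_incr. Qed.

Lemma increasing_iter (f : R -> R) n : increasing f -> increasing (Nat.iter n f).
Proof. intros f_incr; induction n as [|n IH]; intros s t st; simpl; auto. Qed.

Lemma iter_cancel {A : Type} (f g : A -> A) n :
  (forall t, f (g t) = t) -> forall t, Nat.iter n f (Nat.iter n g t) = t.
Proof.
  intros fg; induction n as [|n IH]; intros t; [reflexivity |].
  now rewrite Nat.iter_succ_r, Nat.iter_succ, fg.
Qed.

Lemma iter_ge_id (f : R -> R) n :
  (forall t, t <= f t) -> forall t, t <= Nat.iter n f t.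
Proof.
  intros f_ge; induction n as [|n IH]; intros t; simpl; [apply Rle_refl |].
  eapply Rle_trans; [apply IH | apply f_ge].
Qed.

Lemma conj_ge_id (p q f : R -> R) :
  increasing p -> (forall t, p (q t) = t) -> (forall t, t <= f t) ->
  forall t, t <= p (f (q t)).
Proof. intros p_incr pq f_ge t. rewrite <- (pq t) at 1. apply p_incr, f_ge. Qed.

Lemma iter_comp_ge_id (f h : R -> R) :
  increasing f -> (forall t, t <= f (h t)) ->
  forall n t, t <= Nat.iter n f (Nat.iter n h t).
Proof.
  intros f_incr fh_ge; induction n as [|n IH]; intros t; simpl; [apply Rle_refl |].
  rewrite <- Nat.iter_succ, Nat.iter_succ_r.
  eapply Rle_trans; [apply IH |].
  apply increasing_iter, fh_ge; assumption.
Qed.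

Lemma wpow_add (w : word) p q : wpow w (p + q) = wpow w p ++ wpow w q.
Proof. induction p as [|p IH]; simpl; [reflexivity |]. now rewrite IH, app_assoc. Qed.

Lemma wzpow_opp_nat (w : word) n : wzpow w (- Z.of_nat n) = wpow (winv w) n.
Proof.
  unfold wzpow. destruct n as [|n]; [reflexivity |].
  destruct (Z.leb_spec 0 (- Z.of_nat (S n))); [lia |].
  now rewrite Z.opp_involutive, Nat2Z.id.
Qed.

Section WordEvaluation.

Variables a ai b bi : R -> R.
Local Notation ev := (weval a ai b bi).

Lemma weval_app w1 w2 t : ev (w1 ++ w2) t = ev w1 (ev w2 t).
Proof. induction w1 as [|l w1 IH]; simpl; [reflexivity |]. now rewrite IH. Qed.

Lemma weval_wpow w n t : ev (wpow w n) t = Nat.iter n (ev w) t.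
Proof. induction n as [|n IH]; simpl; [reflexivity |]. now rewrite weval_app, IH. Qed.

Hypotheses (a_ai : forall t, a (ai t) = t) (ai_a : forall t, ai (a t) = t)
           (b_bi : forall t, b (bi t) = t) (bi_b : forall t, bi (b t) = t).

Lemma weval_winv_r w t : ev w (ev (winv w) t) = t.
Proof.
  revert t; induction w as [|l w IH]; intros t; simpl; [reflexivity |].
  change (winv (l :: w)) with (winv w ++ inv_letter l :: nil).
  rewrite weval_app, IH. now destruct l.
Qed.

End WordEvaluation.

Section PositiveAlpha.

Variables a ai b bi : R -> R.
Hypotheses (a_ai : forall t, a (ai t) = t) (ai_a : forall t, ai (a t) = t)
           (b_bi : forall t, b (bi t) = t) (bi_b : forall t, bi (b t) = t)
           (a_incr : strict_increasing a) (b_incr : strict_increasing b)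
           (a_gt_id : forall t, t < a t).
Variable k : nat.

Local Notation ev := (weval a ai b bi).
Local Notation X := (Nat.iter k (fun u => a (b u))).
Local Notation Xi := (Nat.iter k (fun u => bi (ai u))).
Local Notation BA := (Nat.iter k (fun u => b (a u))).
Local Notation D := (ev (winv (relC k))).

Let ai_mono : increasing ai := increasing_inverse a ai a_ai a_incr.
Let bi_mono : increasing bi := increasing_inverse b bi b_bi b_incr.
Let a_mono : increasing a := strict_increasing_increasing a a_incr.
Let b_mono : increasing b := strict_increasing_increasing b b_incr.

Lemma X_mono : increasing X.
Proof. now apply increasing_iter, increasing_comp. Qed.

Lemma Xi_mono : increasing Xi.
Proof. now apply increasing_iter, increasing_comp. Qed.

Lemma X_Xi t : X (Xi t) = t.
Proof. apply iter_cancel; intros u. now rewrite b_bi, a_ai. Qed.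

Lemma Xi_X t : Xi (X t) = t.
Proof. apply iter_cancel; intros u. now rewrite ai_a, bi_b. Qed.

Lemma BA_b t : BA (b t) = b (X t).
Proof. symmetry; now apply Nat.iter_swap_gen. Qed.

Lemma weval_relC t : ev (relC k) t = b (X (ai (Xi t))).
Proof.
  unfold relC. rewrite !weval_app, weval_wpow, wzpow_opp_nat, weval_wpow.
  apply BA_b.
Qed.

Lemma weval_relC_inv t : D t = X (a (Xi (bi t))).
Proof.
  pose proof (weval_winv_r a ai b bi a_ai ai_a b_bi bi_b (relC k) t) as CD.
  rewrite weval_relC in CD. rewrite <- CD at 2.
  now rewrite bi_b, Xi_X, a_ai, X_Xi.
Qed.

Lemma D_mono : increasing D.
Proof.
  intros s t st. rewrite !weval_relC_inv.
  apply X_mono, a_mono, Xi_mono, bi_mono, st.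
Qed.

Lemma conj_a_ge_id t : t <= X (a (Xi t)).
Proof. apply conj_ge_id; [apply X_mono | apply X_Xi | intros s; now apply Rlt_le]. Qed.

Lemma b_D_ge_id t : t <= b (D t).
Proof.
  rewrite weval_relC_inv.
  apply (conj_ge_id b bi (fun s => X (a (Xi s)))); auto using conj_a_ge_id.
Qed.

Lemma D_b_ge_id t : t <= D (b t).
Proof. rewrite weval_relC_inv, bi_b. apply conj_a_ge_id. Qed.

Lemma ba_bi_ge_id t : t <= b (a (bi t)).
Proof. apply conj_ge_id; auto. intros s; now apply Rlt_le. Qed.

Lemma weval_relW omega t : (2 * k <= omega)%nat ->
  ev (relW omega k) t =
  BA (Nat.iter (omega - 2 * k) b (Nat.iter (omega - 2 * k) D (Nat.iter k D t))).
Proof.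
  intros k_le. unfold relW.
  replace (Z.of_nat k - Z.of_nat omega)%Z
    with (- Z.of_nat (omega - 2 * k + k))%Z by lia.
  rewrite wzpow_opp_nat, wpow_add, !weval_app, !weval_wpow.
  reflexivity.
Qed.

Lemma relW_ge_id omega t : (2 * k <= omega)%nat -> t <= ev (relW omega k) t.
Proof.
  intros k_le. rewrite weval_relW by exact k_le.
  (* with n = omega - 2k: t <= (BA)^k B^-k t <= (BA)^k D^k t <= (BA)^k B^n D^n D^k t *)
  apply Rle_trans with (BA (Nat.iter k bi t)).
  { apply iter_comp_ge_id; [now apply increasing_comp | apply ba_bi_ge_id]. }
  apply increasing_iter; [now apply increasing_comp |].
  apply Rle_trans with (Nat.iter k D t).
  - rewrite <- (iter_cancel b bi k b_bi t) at 2.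
    apply iter_comp_ge_id; [exact D_mono | exact D_b_ge_id].
  - apply iter_comp_ge_id; [exact b_mono | exact b_D_ge_id].
Qed.

Lemma relation_forces_b_ge_id omega m :
  (2 * k <= omega)%nat ->
  (forall t, ev (rel_lhs k) t = ev (rel_rhs omega m k) t) ->
  forall t, t <= b t.
Proof.
  intros k_le rel t.
  rewrite <- (X_Xi t) at 2. rewrite <- BA_b.
  assert (lhs : ev (rel_lhs k) (Xi t) = BA (b (Xi t))).
  { unfold rel_lhs. now rewrite weval_app, weval_wpow. }
  assert (rhs : ev (rel_rhs omega m k) (Xi t)
                = Nat.iter m (ev (relW omega k)) (X (a (Xi t)))).
  { unfold rel_rhs. now rewrite !weval_app, !weval_wpow. }
  rewrite <- lhs, rel, rhs.
  apply Rle_trans with (X (a (Xi t))).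
  - apply conj_a_ge_id.
  - apply iter_ge_id. intros s. now apply relW_ge_id.
Qed.

End PositiveAlpha.

Theorem mainTheorem10 (omega m k : nat)
  (homega : (3 <= omega)%nat) (hk1 : (1 <= k)%nat) (hk2 : (k <= (omega - 2) / 2)%nat)
  (a ai b bi : R -> R) (ha : homeo_plus a ai) (hb : homeo_plus b bi)
  (hrel : forall t, weval a ai b bi (rel_lhs k) t = weval a ai b bi (rel_rhs omega m k) t) :
  (forall t, a t > t) -> forall t, b t >= t.
Proof.
  intros a_gt_id t. apply Rle_ge.
  destruct ha as (a_ai & ai_a & a_incr & _), hb as (b_bi & bi_b & b_incr & _).
  assert (k_le : (2 * k <= omega)%nat).
  { pose proof (Nat.Div0.mul_div_le (omega - 2) 2). lia. }
  now apply (relation_forces_b_ge_id a ai b bi a_ai ai_a b_bi bi_b a_incr b_incr a_gt_id k omega m).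
Qed.
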